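(* Let $X$ be a comical set, $x,y$ $0$-cubes of $X$, and $f,g$ $1$-cubes of $X$ with $f\partial_{1,0}=g\partial_{1,0}=x$ and $f\partial_{1,1}=g\partial_{1,1}=y$. Describe a $2$-cube $s$ by its quadruple of faces $(s\partial_{1,0},\,s\partial_{1,1},\,s\partial_{2,0},\,s\partial_{2,1})$. Consider the following eight boundary conditions: (1) $(g,\,y\sigma_1,\,f,\,y\sigma_1)$; (2) $(f,\,y\sigma_1,\,g,\,y\sigma_1)$; (3) $(f,\,g,\,x\sigma_1,\,y\sigma_1)$; (4) $(g,\,f,\,x\sigma_1,\,y\sigma_1)$; (5) $(x\sigma_1,\,y\sigma_1,\,f,\,g)$; (6) $(x\sigma_1,\,y\sigma_1,\,g,\,f)$; (7) $(x\sigma_1,\,f,\,x\sigma_1,\,g)$; (8) $(x\sigma_1,\,g,\,x\sigma_1,\,f)$. If there is a marked $2$-cube in $X$ satisfying one of these boundary conditions, then for each of the other seven conditions there is also a marked $2$-cube in $X$ satisfying it.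
   Context: Cubical sets are presheaves on the box category $\square$ (objects $[1]^n=\{0<1\}^n$; morphisms generated by faces $\partial_{i,\varepsilon}\colon[1]^{n-1}\to[1]^n$ inserting $\varepsilon$ as $i$-th coordinate, degeneracies $\sigma_i\colon[1]^n\to[1]^{n-1}$ deleting the $i$-th coordinate, and connections $\gamma_{i,1},\gamma_{i,0}\colon[1]^n\to[1]^{n-1}$ replacing $x_i,x_{i+1}$ by their max, resp. min); operators act on the right, so for a $0$-cube $x$, $x\sigma_1$ is the degenerate $1$-cube at $x$. A cube is degenerate if it is $x\sigma_i$ or $x\gamma_{i,\varepsilon}$; composites of faces have unique normal forms $\partial_{k_1,\varepsilon_1}\cdots\partial_{k_t,\varepsilon_t}$, $k_1>\dots>k_t$. A marked cubical set is a cubical set with marked cubes of positive dimension containing all degenerate cubes. $\tau_jX$ is $X$ with all cubes of dimension $\ge j+1$ marked. For $n\ge1$, $1\le k\le n$, $\varepsilon\in\{0,1\}$: $\square^n_{k,\varepsilon}$ is $\square^n$ in which a non-degenerate positive-dimensional face in normal form is marked iff none of its factors is $\partial_{k-1,\varepsilon},\partial_{k,0},\partial_{k,1},\partial_{k+1,\varepsilon}$; $\sqcap^n_{k,\varepsilon}$ is the union of codimension-one faces except $\partial_{k,\varepsilon}$, regularly marked. For $n\ge2$, $(\square^n_{k,\varepsilon})''=\tau_{n-2}\square^n_{k,\varepsilon}$ and $(\square^n_{k,\varepsilon})'$ is $\square^n_{k,\varepsilon}$ with all $(n-1)$-faces other than $\partial_{k,\varepsilon}$ marked. A comical set is a marked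 cubical set with the right lifting property against all $\sqcap^n_{k,\varepsilon}\hookrightarrow\square^n_{k,\varepsilon}$ and all $(\square^n_{k,\varepsilon})'\hookrightarrow(\square^n_{k,\varepsilon})''$. *)

(* Coordinates and operator
   indices are 0-based internally: the paper's d_{i,e}, s_i, g_{i,e}
   (1-based i) are [face (i-1) e], [degen (i-1)], [conn (i-1) e]. *)
From mathcomp Require Import all_boot.
From mathcomp Require Import zify.
Set Implicit Arguments. Unset Strict Implicit. Unset Printing Implicit Defensive.

(* points of the cube [1]^n = {0<1}^n *)
Definition pt (n : nat) := n.-tuple bool.

Definition ins (i : nat) (e : bool) (s : seq bool) := take i s ++ e :: drop i s.
Definition del (i : nat) (s : seq bool) := take i s ++ drop i.+1 s.
Definition cn (i : nat) (e : bool) (s : seq bool) :=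
  take i s ++ (if e then nth false s i || nth false s i.+1
               else nth false s i && nth false s i.+1) :: drop i.+2 s.

Lemma ins_sizeP n (i : 'I_n.+1) e (t : pt n) : size (ins i e t) == n.+1.
Proof.
rewrite /ins size_cat /= size_take size_drop size_tuple.
have := ltn_ord i; case: ifP => H1 H2; apply/eqP; lia.
Qed.

Lemma del_sizeP n (i : 'I_n.+1) (t : pt n.+1) : size (del i t) == n.
Proof.
rewrite /del size_cat size_take size_drop size_tuple.
have := ltn_ord i; case: ifP => H1 H2; apply/eqP; lia.
Qed.

Lemma cn_sizeP n (i : 'I_n.+1) e (t : pt n.+2) : size (cn i e t) == n.+1.
Proof.
rewrite /cn size_cat /= size_take size_drop size_tuple.
have := ltn_ord i; case: ifP => H1 H2; apply/eqP; lia.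
Qed.

Definition face n (i : 'I_n.+1) (e : bool) (t : pt n) : pt n.+1 :=
  Tuple (ins_sizeP i e t).
Definition degen n (i : 'I_n.+1) (t : pt n.+1) : pt n := Tuple (del_sizeP i t).
Definition conn n (i : 'I_n.+1) (e : bool) (t : pt n.+2) : pt n.+1 :=
  Tuple (cn_sizeP i e t).

Inductive boxmap : forall m n : nat, (pt m -> pt n) -> Prop :=
| bm_id n : boxmap (@id (pt n))
| bm_comp m n p (f : pt m -> pt n) (g : pt n -> pt p) :
    boxmap f -> boxmap g -> boxmap (g \o f)
| bm_face n (i : 'I_n.+1) e : boxmap (@face n i e)
| bm_degen n (i : 'I_n.+1) : boxmap (@degen n i)
| bm_conn n (i : 'I_n.+1) e : boxmap (@conn n i e).

Definition hom (m n : nat) := {f : pt m -> pt n | boxmap f}.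

Definition idh n : hom n n := exist _ id (bm_id n).
(* [comph f g] is the composite "g after f" *)
Definition comph m n p (f : hom m n) (g : hom n p) : hom m p :=
  exist _ (proj1_sig g \o proj1_sig f) (bm_comp (proj2_sig f) (proj2_sig g)).
Definition dface n (i : 'I_n.+1) e : hom n n.+1 := exist _ _ (bm_face i e).
Definition ddegen n (i : 'I_n.+1) : hom n.+1 n := exist _ _ (bm_degen i).
Definition dconn n (i : 'I_n.+1) e : hom n.+2 n.+1 := exist _ _ (bm_conn i e).

Inductive dgen : forall m n : nat, (pt m -> pt n) -> Prop :=
| dg_s n (i : 'I_n.+1) : dgen (@degen n i)
| dg_c n (i : 'I_n.+1) e : dgen (@conn n i e).

(* cubical set = presheaf on the box category; operators act on the right:
   [act h x] is x.h, and x.(g o f) = (x.g).f *)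
Record cset := CSet {
  cell : nat -> Type;
  act : forall m n, hom m n -> cell n -> cell m;
  act_id : forall n (x : cell n), act (idh n) x = x;
  act_comp : forall m n p (f : hom m n) (g : hom n p) (x : cell p),
      act (comph f g) x = act f (act g x)
}.
Arguments act {c m n}.

Definition degenerate (X : cset) n (x : cell X n) : Prop :=
  exists m (h : hom n m) (y : cell X m), dgen (proj1_sig h) /\ x = act h y.

Record mcset := MCSet {
  mX :> cset;
  marked : forall n, cell mX n -> Prop;
  marked_pos : forall x : cell mX 0, ~ marked x;
  marked_degen : forall n (x : cell mX n), degenerate x -> marked x
}.
Arguments marked {m n}.

Definition degenerate_rep m n (f : hom m n) : Prop :=
  exists p (d : hom m p) (y : hom p n), dgen (proj1_sig d) /\ f = comph d y.

(* composite of faces d_{k1,e1} ... d_{kt,et} (0-based k's), i.e. the map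
   d_{k1,e1} o ... o d_{kt,et}, given as L = [:: (k1,e1); ...; (kt,et)] *)
Definition facemap (L : seq (nat * bool)) (s : seq bool) : seq bool :=
  foldr (fun a s => ins a.1 a.2 s) s L.

Definition face_nf m n (f : hom m n) (L : seq (nat * bool)) : Prop :=
  [/\ sorted (fun a b : nat * bool => b.1 < a.1) L,
      all (fun a : nat * bool => a.1 < n) L,
      size L + m = n &
      forall p : pt m, val (proj1_sig f p) = facemap L (val p)].

(* marked cubes of [][n]_{k,e} (k is the 0-based index, paper index k+1):
   degenerate cubes, and non-degenerate positive-dimensional faces whose
   normal form contains none of d_{k-1,e}, d_{k,0}, d_{k,1}, d_{k+1,e}
   (paper indexing) *)
Definition bad_factor (k : nat) (e : bool) (a : nat * bool) : bool :=
  [|| a.1 == k, (a.1.+1 == k) && (a.2 == e) | (a.1 == k.+1) && (a.2 == e)].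

Definition markedK n (k : nat) (e : bool) m (f : hom m n) : Prop :=
  degenerate_rep f \/
  (0 < m /\ exists L, face_nf f L /\ all (fun a => ~~ bad_factor k e a) L).

Definition inbox n (k : 'I_n.+1) (e : bool) m (f : hom m n.+1) : Prop :=
  exists (i : 'I_n.+1) (d : bool), (i, d) <> (k, e) /\
    exists g : hom m n, f = comph g (dface i d).

(* right lifting property of X against the inclusion of the open box
   (regularly marked) into [][n+1]_{k,e} *)
Definition fills_boxes (X : mcset) n (k : 'I_n.+1) (e : bool) : Prop :=
  forall (phi : forall m (f : hom m n.+1), inbox k e f -> cell X m),
    (forall m p (f : hom m n.+1) (g : hom p m) (H : inbox k e f)
            (H' : inbox k e (comph g f)),
        phi p (comph g f) H' = act g (phi m f H)) ->
    (forall m (f : hom m n.+1) (H : inbox k e f),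
        markedK k e f -> marked (phi m f H)) ->
    exists z : cell X n.+1,
      (forall m (f : hom m n.+1) (H : inbox k e f), act f z = phi m f H) /\
      (forall m (f : hom m n.+1), markedK k e f -> marked (act f z)).

Definition markedK' n (k : 'I_n.+1) (e : bool) m (f : hom m n.+1) : Prop :=
  markedK k e f \/
  exists (i : 'I_n.+1) (d : bool) (Hm : m = n), (i, d) <> (k, e) /\
    f = eq_rect_r (fun m => hom m n.+1) (dface i d) Hm.

Definition markedK'' n (k : 'I_n.+1) (e : bool) m (f : hom m n.+1) : Prop :=
  markedK k e f \/ n <= m.

(* right lifting property against ([][n+1]_{k,e})' -> ([][n+1]_{k,e})'' *)
Definition lifts_marking (X : mcset) n (k : 'I_n.+1) (e : bool) : Prop :=
  forall z : cell X n.+1,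
    (forall m (f : hom m n.+1), markedK' k e f -> marked (act f z)) ->
    (forall m (f : hom m n.+1), markedK'' k e f -> marked (act f z)).

Definition comical (X : mcset) : Prop :=
  (forall n (k : 'I_n.+1) (e : bool), fills_boxes X k e) /\
  (forall n (k : 'I_n.+2) (e : bool), lifts_marking X k e).

Definition d10 : hom 1 2 := dface (@ord0 1) false.
Definition d11 : hom 1 2 := dface (@ord0 1) true.
Definition d20 : hom 1 2 := dface (@ord_max 1) false.
Definition d21 : hom 1 2 := dface (@ord_max 1) true.
Definition p10 : hom 0 1 := dface (@ord0 0) false.
Definition p11 : hom 0 1 := dface (@ord0 0) true.
Definition s1 : hom 1 0 := ddegen (@ord0 0).

Definition has_bnd (X : cset) (s : cell X 2) (q : cell X 1 * cell X 1 * cell X 1 * cell X 1) :=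
  let: (a, b, c, d) := q in
  [/\ act d10 s = a, act d11 s = b, act d20 s = c & act d21 s = d].

(* the eight boundary conditions (1)..(8), indexed 0..7 *)
Definition bnd (X : cset) (x y : cell X 0) (f g : cell X 1) (i : 'I_8) :
  cell X 1 * cell X 1 * cell X 1 * cell X 1 :=
  let xs := act s1 x in let ys := act s1 y in
  match val i with
  | 0 => (g, ys, f, ys)
  | 1 => (f, ys, g, ys)
  | 2 => (f, g, xs, ys)
  | 3 => (g, f, xs, ys)
  | 4 => (xs, ys, f, g)
  | 5 => (xs, ys, g, f)
  | 6 => (xs, f, xs, g)
  | _ => (xs, g, xs, f)
  end.

(* Every implication comes from filling an open box in dimension 3.  We
   build a 3-dimensional cube boundary whose faces are a given marked square
   realizing one condition, degenerate squares on f, g, x, y, and a missing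
   face carrying another condition; the filler of [][3]_{k,e} provided by
   comicality, followed by the marking extension
   ([][3]_{k,e})' -> ([][3]_{k,e})'', produces a marked square for the
   missing face.  Four concrete
   cubes give (1)<->(5), (5)<->(7), (5)<->(3) and (1)->(6); exchanging f and g
   gives the symmetric statements, which link all eight conditions. *)
From mathcomp Require Import all_boot zify.
From Stdlib Require Import FunctionalExtensionality ProofIrrelevance.
Set Implicit Arguments. Unset Strict Implicit. Unset Printing Implicit Defensive.

Lemma homE m n (f g : hom m n) :
  (forall p, val (proj1_sig f p) = val (proj1_sig g p)) -> f = g.
Proof.
case: f g => [f Hf] [g Hg] /= H.
have E : f = g by apply: functional_extensionality => p; apply: val_inj; exact: H.
by subst g; f_equal; apply: proof_irrelevance.
Qed.

Lemma ins0 d (s : seq bool) : ins 0 d s = d :: s.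
Proof. by rewrite /ins take0 drop0. Qed.
Lemma insS i d b (s : seq bool) : ins i.+1 d (b :: s) = b :: ins i d s.
Proof. by []. Qed.
Lemma del0 b (s : seq bool) : del 0 (b :: s) = s.
Proof. by rewrite /del take0 drop1. Qed.
Lemma delS i b (s : seq bool) : del i.+1 (b :: s) = b :: del i s.
Proof. by rewrite /del. Qed.

Lemma ins_del (s : seq bool) i : i < size s -> ins i (nth false s i) (del i s) = s.
Proof.
elim: s i => [|b s IH] [|i] // lt; first by rewrite del0 ins0.
by rewrite delS insS IH.
Qed.

Lemma del_ins (s : seq bool) i d : i <= size s -> del i (ins i d s) = s.
Proof.
elim: s i => [|b s IH] [|i] // le; rewrite ?ins0 ?del0 //.
by rewrite insS delS IH.
Qed.

Lemma nth_ins (s : seq bool) i d : i <= size s -> nth false (ins i d s) i = d.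
Proof.
elim: s i => [|b s IH] [|i] // le; rewrite ?ins0 //.
by rewrite insS -[RHS](IH i le).
Qed.

Lemma nth_ins_gt (s : seq bool) i j d : i < j -> nth false (ins i d s) j = nth false s j.-1.
Proof.
elim: s i j => [|b s IH] [|i] [|j] // lt; rewrite ?ins0 //.
by rewrite insS -[LHS]/(nth false (ins i d s) j) IH //; case: j lt.
Qed.

Lemma del_ins_lt (s : seq bool) i j d : i < j -> del j (ins i d s) = ins i d (del j.-1 s).
Proof.
elim: s i j => [|b s IH] [|i] [|j] // lt; try by rewrite !ins0 delS.
by case: j lt => // j lt; rewrite insS !delS IH.
Qed.

Definition lies_in m n (f : hom m n) (i : nat) (d : bool) : bool :=
  [forall p : pt m, nth false (val (proj1_sig f p)) i == d].

Lemma lies_in_face m n (g : hom m n) (i : 'I_n.+1) d : lies_in (comph g (dface i d)) i d.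
Proof. by apply/forallP => p /=; rewrite nth_ins // size_tuple -ltnS ltn_ord. Qed.

Lemma factor_face m n (f : hom m n.+1) (i : 'I_n.+1) d :
  lies_in f i d -> f = comph (comph f (ddegen i)) (dface i d).
Proof.
move=> /forallP H; apply: homE => p /=.
by rewrite -(eqP (H p)) ins_del // size_tuple ltn_ord.
Qed.

Lemma face_cancel m n (g g' : hom m n) (i : 'I_n.+1) d d' :
  comph g (dface i d) = comph g' (dface i d') -> d = d' /\ g = g'.
Proof.
move=> H; have E p : ins i d (val (proj1_sig g p)) = ins i d' (val (proj1_sig g' p)).
  exact: (congr1 (fun h => val (proj1_sig h p)) H).
have Hs (h : hom m n) p : i <= size (val (proj1_sig h p)).
  by rewrite size_tuple -ltnS ltn_ord.
split; first by have := congr1 (nth false ^~ i) (E [tuple of nseq m false]); rewrite !nth_ins ?Hs.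
by apply: homE => p; have := congr1 (del i) (E p); rewrite !del_ins ?Hs.
Qed.

Lemma face_pullback m n (g g' : hom m n.+1) (i i' : 'I_n.+2) (j j' : 'I_n.+1) d d' :
  comph g (dface i d) = comph g' (dface i' d') ->
  i < i' -> j.+1 = i' -> j' = i :> nat ->
  g = comph (comph g (ddegen j)) (dface j d') /\
  g' = comph (comph g (ddegen j)) (dface j' d).
Proof.
move=> H lt Ej Ej'; have E p : ins i d (val (proj1_sig g p)) = ins i' d' (val (proj1_sig g' p)).
  exact: (congr1 (fun h => val (proj1_sig h p)) H).
split; apply: homE => p /=.
- have <- : nth false (ins i d (val (proj1_sig g p))) i' = d'.
    by rewrite E nth_ins // size_tuple -ltnS ltn_ord.
  by rewrite nth_ins_gt // -Ej ins_del // size_tuple ltn_ord.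
- rewrite Ej' -(del_ins (i := i') d' (s := val (proj1_sig g' p))); last first.
    by rewrite size_tuple -ltnS ltn_ord.
  by rewrite -E del_ins_lt // -Ej.
Qed.

(* Equality of two concrete maps between cubes of dimension at most 3,
   checked pointwise on all points. *)
Ltac hom_eq := apply: homE; case; case => [|? [|? [|? [|? ?]]]] //= _;
  repeat (match goal with b : bool |- _ => case: b end); by [].

Definition other_face (k : 'I_3) (e : bool) (i : nat) (d : bool) : bool :=
  ~~ ((i == k) && (d == e)).

Lemma not_bad_other (k : 'I_3) e (i : nat) d :
  ~~ bad_factor k e (i, d) -> other_face k e i d.
Proof. by rewrite /bad_factor /other_face /= => /norP [/negbTE -> _]. Qed.

Lemma other_faceP (k : 'I_3) e (i : 'I_3) d : reflect ((i, d) <> (k, e)) (other_face k e i d).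
Proof.
apply: (iffP idP) => [oki [Ei Ed] | ne]; first by move: oki; rewrite Ei Ed /other_face !eqxx.
by apply/negP => /andP [/eqP/val_inj Ei /eqP Ed]; apply: ne; rewrite Ei Ed.
Qed.

Section Boundaries.
Variable X : cset.

Definition quad : Type := (cell X 1 * cell X 1 * cell X 1 * cell X 1)%type.

Definition boundary (s : cell X 2) : quad := (act d10 s, act d11 s, act d20 s, act d21 s).

Lemma has_bndE s q : has_bnd s q <-> boundary s = q.
Proof. by case: q => [[[a b] c] d]; split => [[<- <- <- <-] | [<- <- <- <-]]. Qed.

Definition edge (q : quad) (j : nat) (b : bool) : cell X 1 :=
  let: (a0, a1, c0, c1) := q in
  if j == 0 then (if b then a1 else a0) else (if b then c1 else c0).

Lemma edge_boundary s (j : 'I_2) b : edge (boundary s) j b = act (dface j b) s.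
Proof. by case: j => [[|[|//]] Hj]; case: b; congr act; congr dface; apply: val_inj. Qed.

Lemma quad_ext (q q' : quad) :
  (forall (j : 'I_2) b, edge q j b = edge q' j b) -> q = q'.
Proof.
case: q q' => [[[a0 a1] c0] c1] [[[a0' a1'] c0'] c1'] E.
by move: (E ord0 false) (E ord0 true) (E ord_max false) (E ord_max true) => /= -> -> -> ->.
Qed.

(* Six boundary quadruples [q i d], one for each face x_{i+1} = d of a
   3-cube, fit together along the edges of the cube, at least among the
   faces selected by [ok]. *)
Definition cube_bnd (ok : nat -> bool -> bool) (q : nat -> bool -> quad) : Prop :=
  [/\ forall d d', ok 0 d -> ok 1 d' -> edge (q 0 d) 0 d' = edge (q 1 d') 0 d,
      forall d d', ok 0 d -> ok 2 d' -> edge (q 0 d) 1 d' = edge (q 2 d') 0 d &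
      forall d d', ok 1 d -> ok 2 d' -> edge (q 1 d) 1 d' = edge (q 2 d') 1 d].

Lemma cube_bnd_missing (k : 'I_3) (e : bool) (q q' : nat -> bool -> quad) :
  cube_bnd (fun _ _ => true) q -> cube_bnd (fun _ _ => true) q' ->
  (forall (i : 'I_3) d, other_face k e i d -> q i d = q' i d) -> q k e = q' k e.
Proof.
move=> [Q1 Q2 Q3] [Q1' Q2' Q3'] Eq.
have E i d : i < 3 -> other_face k e i d -> q i d = q' i d by move=> lt; exact: (Eq (Ordinal lt)).
apply: quad_ext; case: k Eq E => [[|[|[|//]]] Hk] /= Eq E [[|[|//]] Hj] b /=.
- by rewrite Q1 // Q1' // E.
- by rewrite Q2 // Q2' // E.
- by rewrite -Q1 // -Q1' // E.
- by rewrite Q3 // Q3' // E.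
- by rewrite -Q2 // -Q2' // E.
- by rewrite -Q3 // -Q3' // E.
Qed.

Definition cube_face (z : cell X 3) (i : nat) (d : bool) : cell X 2 :=
  act (dface (inord i) d) z.

Lemma cube_faceE z (i : 'I_3) d : cube_face z i d = act (dface i d) z.
Proof. by rewrite /cube_face inord_val. Qed.

Lemma cube_faces_bnd (z : cell X 3) :
  cube_bnd (fun _ _ => true) (fun i d => boundary (cube_face z i d)).
Proof.
have F0 d : cube_face z 0 d = act (dface ord0 d) z := cube_faceE z ord0 d.
have F1 d : cube_face z 1 d = act (dface (Ordinal (isT : 1 < 3)) d) z :=
  cube_faceE z (Ordinal (isT : 1 < 3)) d.
have F2 d : cube_face z 2 d = act (dface ord_max d) z := cube_faceE z ord_max d.
by split=> d d' _ _; rewrite ?F0 ?F1 ?F2; case: d; case: d' => /=;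
  rewrite -!act_comp; congr act; hom_eq.
Qed.

End Boundaries.

Section BoxFilling.
Variables (X : mcset) (k : 'I_3) (e : bool) (a : nat -> bool -> cell X 2).
Local Notation ok := (other_face k e).
Hypothesis a_bnd : cube_bnd ok (fun i d => boundary (a i d)).

Lemma glue_lt m (g g' : hom m 2) (i i' : 'I_3) d d' :
  i < i' -> ok i d -> ok i' d' -> comph g (dface i d) = comph g' (dface i' d') ->
  act g (a i d) = act g' (a i' d').
Proof.
case: a_bnd => C1 C2 C3.
case: i i' => [[|[|[|//]]] Hi] [[|[|[|//]]] Hi'] //= lt oki oki' E.
- case: (face_pullback (j := ord0) (j' := ord0) E lt erefl erefl) => Eg Eg'.
  rewrite Eg' {1}Eg [LHS]act_comp [RHS]act_comp; congr act.
  by rewrite -[LHS](edge_boundary _ ord0) -[RHS](edge_boundary _ ord0) C1.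
- case: (face_pullback (j := ord_max) (j' := ord0) E lt erefl erefl) => Eg Eg'.
  rewrite Eg' {1}Eg [LHS]act_comp [RHS]act_comp; congr act.
  by rewrite -[LHS](edge_boundary _ ord_max) -[RHS](edge_boundary _ ord0) C2.
- case: (face_pullback (j := ord_max) (j' := ord_max) E lt erefl erefl) => Eg Eg'.
  rewrite Eg' {1}Eg [LHS]act_comp [RHS]act_comp; congr act.
  by rewrite -[LHS](edge_boundary _ ord_max) -[RHS](edge_boundary _ ord_max) C3.
Qed.

Lemma glue m (g g' : hom m 2) (i i' : 'I_3) d d' :
  ok i d -> ok i' d' -> comph g (dface i d) = comph g' (dface i' d') ->
  act g (a i d) = act g' (a i' d').
Proof.
move=> oki oki' E; case: (ltngtP i i') => [lt | gt | /val_inj Ei].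
- exact: glue_lt E.
- by apply/esym/glue_lt; last exact/esym.
- by subst i'; case: (face_cancel E) => <- <-.
Qed.

Definition pick_face m (f : hom m 3) : 'I_3 * bool :=
  odflt (k, e) [pick q : 'I_3 * bool | ok q.1 q.2 && lies_in f q.1 q.2].

Definition box_map m (f : hom m 3) : cell X m :=
  act (comph f (ddegen (pick_face f).1)) (a (pick_face f).1 (pick_face f).2).

Lemma box_mapE m (f : hom m 3) (g : hom m 2) (i : 'I_3) d :
  ok i d -> f = comph g (dface i d) -> box_map f = act g (a i d).
Proof.
move=> oki Ef; rewrite /box_map /pick_face; case: pickP => [[i' d'] /andP [oki' in'] | none] /=.
- by apply: glue => //; rewrite -(factor_face in') Ef.
- by have := none (i, d); rewrite /= oki Ef lies_in_face.
Qed.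

Lemma box_map_natural m p (f : hom m 3) (g : hom p m) :
  inbox k e f -> box_map (comph g f) = act g (box_map f).
Proof.
case=> i [d [ne [h Ef]]]; have oki := introT (other_faceP _ _ _ _) ne.
rewrite (box_mapE oki Ef) (box_mapE (g := comph g h) oki) ?act_comp //.
by rewrite Ef; apply: homE.
Qed.

Hypothesis a_marked : forall (i : 'I_3) d, ok i d -> marked (a i d).
Hypothesis edges_marked : forall (j : 'I_2) (i : 'I_3) b d,
  j < i -> ~~ bad_factor k e (nat_of_ord i, d) -> ~~ bad_factor k e (nat_of_ord j, b) ->
  marked (act (dface j b) (a i d)).

Lemma box_map_marked_degen m (f : hom m 3) :
  inbox k e f -> degenerate_rep f -> marked (box_map f).
Proof.
case=> i [d [ne [h Ef]]] [p [dd [y [Hdd Efd]]]].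
have inf : lies_in f i d by rewrite Ef lies_in_face.
rewrite (box_mapE (introT (other_faceP _ _ _ _) ne) (factor_face inf)) Efd.
apply: marked_degen; exists p, dd, (act (comph y (ddegen i)) (a i d)); split=> //.
by rewrite -act_comp; congr act; apply: homE.
Qed.

Lemma not_inbox_top (f : hom 3 3) : inbox k e f -> ~ face_nf f [::].
Proof.
case=> i [d [_ [h ->]]] [_ _ _ Hpt].
have /forallP /(_ [tuple of nseq 3 (~~ d)]) /eqP := lies_in_face h i d.
by rewrite Hpt; clear Hpt; case: d; case: i => [[|[|[|]]] ?].
Qed.

Lemma box_map_marked_face m (f : hom m 3) L :
  inbox k e f -> 0 < m -> face_nf f L -> all (fun a => ~~ bad_factor k e a) L ->
  marked (box_map f).
Proof.
move=> inf m_gt0 nf; case: (nf) => sorted_L all_L size_L Hpt.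
case: L nf sorted_L all_L size_L Hpt => [|[k1 e1] [|[k2 e2] [|? ?]]] /= nf sorted_L;
  rewrite ?andbT => all_L size_L Hpt good.
- have Em : m = 3 by lia.
  by subst m; case: (not_inbox_top inf nf).
- have Em : m = 2 by lia.
  subst m; have Ef : f = comph (idh 2) (dface (Ordinal all_L) e1).
    by apply: homE => p; exact: (Hpt p).
  rewrite (box_mapE (i := Ordinal all_L) (not_bad_other good) Ef) act_id.
  exact/a_marked/not_bad_other.
- have Em : m = 1 by lia.
  subst m; case/andP: all_L => k1_lt k2_lt; case/andP: good => good1 good2.
  have k2_lt' : k2 < 2 by lia.
  have Ef : f = comph (dface (Ordinal k2_lt') e2) (dface (Ordinal k1_lt) e1).
    by apply: homE => p; exact: (Hpt p).
  rewrite (box_mapE (i := Ordinal k1_lt) (not_bad_other good1) Ef).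
  by apply: edges_marked => //=; lia.
- lia.
Qed.

Variable HX : comical X.

Theorem box_filler :
  exists z : cell X 3,
    (forall (i : 'I_3) d, ok i d -> act (dface i d) z = a i d) /\ marked (act (dface k e) z).
Proof.
have [z [z_box z_marked]] : exists z : cell X 3,
    (forall m (f : hom m 3) (H : inbox k e f), act f z = box_map f) /\
    (forall m (f : hom m 3), markedK k e f -> marked (act f z)).
  apply: (HX.1 2 k e (fun m f _ => box_map f)) => [m p f g H _ | m f H].
  - exact: box_map_natural.
  - case=> [degen | [m_gt0 [L [nf good]]]]; first exact: box_map_marked_degen.
    exact: box_map_marked_face nf good.
have z_face (i : 'I_3) d : ok i d -> act (dface i d) z = a i d.
  move=> oki; have Ef : dface i d = comph (idh 2) (dface i d) by apply: homE.
  have inf : inbox k e (dface i d) by exists i, d; split; [exact/other_faceP | exists (idh 2)].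
  by rewrite (z_box _ _ inf) (box_mapE oki Ef) act_id.
exists z; split => //.
apply: (HX.2 1 k e z _ 2 (dface k e)); last by right.
move=> m f [marked_f | [i [d [Em [ne Ef]]]]]; first exact: z_marked.
subst m; rewrite Ef /= z_face; last exact/other_faceP.
exact/a_marked/other_faceP.
Qed.

End BoxFilling.

Theorem fill_box (X : mcset) (HX : comical X) (k : 'I_3) (e : bool)
    (q : nat -> bool -> quad X) (a : nat -> bool -> cell X 2) :
  cube_bnd (fun _ _ => true) q ->
  (forall (i : 'I_3) d, other_face k e i d -> marked (a i d) /\ boundary (a i d) = q i d) ->
  (forall (j : 'I_2) (i : 'I_3) b d, j < i ->
     ~~ bad_factor k e (nat_of_ord i, d) -> ~~ bad_factor k e (nat_of_ord j, b) ->
     marked (edge (q i d) j b)) ->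
  exists t, marked t /\ boundary t = q k e.
Proof.
move=> q_cube a_faces q_edges.
have a_bnd i d : i < 3 -> other_face k e i d -> boundary (a i d) = q i d.
  by move=> lt oki; exact: (a_faces (Ordinal lt) d oki).2.
have a_cube : cube_bnd (other_face k e) (fun i d => boundary (a i d)).
  case: q_cube => Q1 Q2 Q3.
  by split=> d d' ok1 ok2; rewrite !a_bnd //; [exact: Q1 | exact: Q2 | exact: Q3].
have [|j i b d ji good_i good_j|z [z_faces z_marked]] := box_filler a_cube _ _ HX.
- by move=> i d /a_faces [].
- rewrite -edge_boundary (a_faces i d (not_bad_other good_i)).2; exact: q_edges.
exists (act (dface k e) z); split => //.
rewrite -cube_faceE; apply: cube_bnd_missing (cube_faces_bnd z) q_cube _ => i d oki.
by rewrite cube_faceE z_faces // (a_faces i d oki).2.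
Qed.

Definition sig1 (X : cset) (h : cell X 1) : cell X 2 := act (ddegen (@ord0 1)) h.
Definition sig2 (X : cset) (h : cell X 1) : cell X 2 := act (ddegen (@ord_max 1)) h.
Definition gmax (X : cset) (h : cell X 1) : cell X 2 := act (dconn (@ord0 0) true) h.
Definition gmin (X : cset) (h : cell X 1) : cell X 2 := act (dconn (@ord0 0) false) h.

Lemma marked_degen_s (X : mcset) n (i : 'I_n.+1) (h : cell X n) : marked (act (ddegen i) h).
Proof. by apply: marked_degen; exists n, (ddegen i), h; split => //; exact: dg_s. Qed.

Lemma marked_degen_c (X : mcset) n (i : 'I_n.+1) e (h : cell X n.+1) :
  marked (act (dconn i e) h).
Proof. by apply: marked_degen; exists n.+1, (dconn i e), h; split => //; exact: dg_c. Qed.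

(* Each boundary edge of a degenerate square is a face of h or a degenerate
   edge at an endpoint of h. *)
Ltac square_bnd := rewrite /boundary -!act_comp; congr (_, _, _, _);
  first [by rewrite -[RHS]act_id; congr act; hom_eq | by congr act; hom_eq].

Section DegenerateSquares.
Variables (X : mcset) (u v : cell X 0) (h : cell X 1).
Hypotheses (hu : act p10 h = u) (hv : act p11 h = v).

Lemma sig1_square : marked (sig1 h) /\ boundary (sig1 h) = (h, h, act s1 u, act s1 v).
Proof. by split; [exact: marked_degen_s | rewrite -hu -hv; square_bnd]. Qed.

Lemma sig2_square : marked (sig2 h) /\ boundary (sig2 h) = (act s1 u, act s1 v, h, h).
Proof. by split; [exact: marked_degen_s | rewrite -hu -hv; square_bnd]. Qed.

Lemma gmax_square : marked (gmax h) /\ boundary (gmax h) = (h, act s1 v, h, act s1 v).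
Proof. by split; [exact: marked_degen_c | rewrite -hv; square_bnd]. Qed.

Lemma gmin_square : marked (gmin h) /\ boundary (gmin h) = (act s1 u, h, act s1 u, h).
Proof. by split; [exact: marked_degen_c | rewrite -hu; square_bnd]. Qed.
End DegenerateSquares.

Lemma point_square (X : mcset) (v : cell X 0) :
  marked (sig1 (act s1 v)) /\
  boundary (sig1 (act s1 v)) = (act s1 v, act s1 v, act s1 v, act s1 v).
Proof.
have vK e : act (dface (@ord0 0) e) (act s1 v) = v.
  by rewrite -act_comp -[RHS]act_id; congr act; hom_eq.
exact: sig1_square (vK false) (vK true).
Qed.

Definition fillable (X : mcset) (q : quad X) : Prop := exists s, marked s /\ boundary s = q.

Lemma fillableE (X : mcset) (q : quad X) :
  (exists s : cell X 2, marked s /\ has_bnd s q) <-> fillable q.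
Proof. by split=> -[s [Hs Bs]]; exists s; split=> //; apply/has_bndE. Qed.

(* Routine obligations of [fill_box] for the concrete cubes below: the known
   faces are given marked squares, and the edges that must be marked are
   degenerate. *)
Ltac box_faces := move=> [[|[|[|//]]] ?] [] //= _.
Ltac box_edges := move=> [[|[|//]] ?] [[|[|[|//]]] ?] [] [] //= _ _ _; exact: marked_degen_s.

Definition parallel (X : cset) (x y : cell X 0) (f g : cell X 1) : Prop :=
  [/\ act p10 f = x, act p10 g = x, act p11 f = y & act p11 g = y].

Lemma parallel_sym (X : cset) (x y : cell X 0) (f g : cell X 1) :
  parallel x y f g -> parallel x y g f.
Proof. by case. Qed.

Section EightConditions.
Variables (X : mcset) (HX : comical X) (x y : cell X 0) (f g : cell X 1).
Hypothesis fg : parallel x y f g.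
Local Notation xs := (act s1 x).
Local Notation ys := (act s1 y).
Local Notation all_faces := (fun (_ : nat) (_ : bool) => true).

(* Each of the following cubes has two faces with boundaries among the eight
   conditions, the other four faces being degenerate squares; filling the
   box from either of the two faces yields the other. *)

(* Conditions (5) at x_1 = 0 and (1) at x_3 = 1. *)
Definition cube15 (i : nat) (d : bool) : quad X :=
  match i, d with
  | 0, false => (xs, ys, f, g) | 0, true => (ys, ys, ys, ys)
  | 1, false => (xs, ys, f, f) | 1, true => (ys, ys, ys, ys)
  | 2, false => (f, ys, f, ys) | _, _ => (g, ys, f, ys)
  end.

Definition cube15_faces (s : cell X 2) (i : nat) (d : bool) : cell X 2 :=
  match i, d with
  | 0, true | 1, true => sig1 ys | 1, false => sig2 f | 2, false => gmax f | _, _ => s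
  end.

Lemma cond1_iff_cond5 : fillable (g, ys, f, ys) <-> fillable (xs, ys, f, g).
Proof.
case: fg => hf0 hg0 hf1 hg1.
have cube : cube_bnd all_faces cube15 by split=> d d' _ _; case: d; case: d'.
have Py := point_square y; have Sf := sig2_square hf0 hf1; have Mf := gmax_square hf1.
split=> -[s [Hs Bs]].
- apply: (fill_box HX (k := ord0) (e := false) cube (a := cube15_faces s));
    [box_faces | box_edges].
- apply: (fill_box HX (k := ord_max) (e := true) cube (a := cube15_faces s));
    [box_faces | box_edges].
Qed.

(* Conditions (5) at x_1 = 1 and (7) at x_3 = 0. *)
Definition cube57 (i : nat) (d : bool) : quad X :=
  match i, d with
  | 0, false => (xs, xs, xs, xs) | 0, true => (xs, ys, f, g)
  | 1, false => (xs, xs, xs, xs) | 1, true => (xs, ys, g, g)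
  | 2, false => (xs, f, xs, g) | _, _ => (xs, g, xs, g)
  end.

Definition cube57_faces (s : cell X 2) (i : nat) (d : bool) : cell X 2 :=
  match i, d with
  | 0, false | 1, false => sig1 xs | 1, true => sig2 g | 2, true => gmin g | _, _ => s
  end.

Lemma cond5_iff_cond7 : fillable (xs, ys, f, g) <-> fillable (xs, f, xs, g).
Proof.
case: fg => hf0 hg0 hf1 hg1.
have cube : cube_bnd all_faces cube57 by split=> d d' _ _; case: d; case: d'.
have Px := point_square x; have Sg := sig2_square hg0 hg1; have Mg := gmin_square hg0.
split=> -[s [Hs Bs]].
- apply: (fill_box HX (k := ord_max) (e := false) cube (a := cube57_faces s));
    [box_faces | box_edges].
- apply: (fill_box HX (k := ord0) (e := true) cube (a := cube57_faces s));
    [box_faces | box_edges].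
Qed.

(* Conditions (5) at x_1 = 0 and (3) at x_3 = 0. *)
Definition cube53 (i : nat) (d : bool) : quad X :=
  match i, d with
  | 0, false => (xs, ys, f, g) | 0, true => (xs, ys, g, g)
  | 1, false => (xs, xs, xs, xs) | 1, true => (ys, ys, ys, ys)
  | 2, false => (f, g, xs, ys) | _, _ => (g, g, xs, ys)
  end.

Definition cube53_faces (s : cell X 2) (i : nat) (d : bool) : cell X 2 :=
  match i, d with
  | 0, true => sig2 g | 1, false => sig1 xs | 1, true => sig1 ys | 2, true => sig1 g
  | _, _ => s
  end.

Lemma cond5_iff_cond3 : fillable (xs, ys, f, g) <-> fillable (f, g, xs, ys).
Proof.
case: fg => hf0 hg0 hf1 hg1.
have cube : cube_bnd all_faces cube53 by split=> d d' _ _; case: d; case: d'.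
have Px := point_square x; have Py := point_square y.
have Sg := sig2_square hg0 hg1; have S1g := sig1_square hg0 hg1.
split=> -[s [Hs Bs]].
- apply: (fill_box HX (k := ord_max) (e := false) cube (a := cube53_faces s));
    [box_faces | box_edges].
- apply: (fill_box HX (k := ord0) (e := false) cube (a := cube53_faces s));
    [box_faces | box_edges].
Qed.

(* Conditions (6) at x_2 = 0 and (1) at x_3 = 1; here only one direction of
   the box filling is needed. *)
Definition cube16 (i : nat) (d : bool) : quad X :=
  match i, d with
  | 0, false => (xs, ys, g, g) | 0, true => (ys, ys, ys, ys)
  | 1, false => (xs, ys, g, f) | 1, true => (ys, ys, ys, ys)
  | 2, false => (g, ys, g, ys) | _, _ => (g, ys, f, ys)
  end.

Definition cube16_faces (s : cell X 2) (i : nat) (d : bool) : cell X 2 :=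
  match i, d with
  | 0, false => sig2 g | 0, true | 1, true => sig1 ys | 2, false => gmax g | _, _ => s
  end.

Lemma cond1_to_cond6 : fillable (g, ys, f, ys) -> fillable (xs, ys, g, f).
Proof.
case: fg => hf0 hg0 hf1 hg1.
have cube : cube_bnd all_faces cube16 by split=> d d' _ _; case: d; case: d'.
have Py := point_square y; have Sg := sig2_square hg0 hg1; have Mg := gmax_square hg1.
move=> [s [Hs Bs]].
by apply: (fill_box HX (k := Ordinal (isT : 1 < 3)) (e := false) cube (a := cube16_faces s));
  [box_faces | box_edges].
Qed.

End EightConditions.

Unset Implicit Arguments.

Theorem proposition4p1 (X : mcset) (HX : comical X) (x y : cell X 0)
  (f g : cell X 1)
  (hf0 : act p10 f = x) (hg0 : act p10 g = x)
  (hf1 : act p11 f = y) (hg1 : act p11 g = y)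
  (i : 'I_8)
  (Hi : exists s : cell X 2, marked s /\ has_bnd s (bnd x y f g i)) :
  forall j : 'I_8, exists s : cell X 2, marked s /\ has_bnd s (bnd x y f g j).
Proof.
have fg : parallel x y f g by [].
have gf := parallel_sym fg.
(* Conditions (1)-(8) for (f, g) are conditions (2), (1), (4), (3), (6), (5),
   (8), (7) for (g, f). *)
have E15 := cond1_iff_cond5 HX fg; have E26 := cond1_iff_cond5 HX gf.
have E57 := cond5_iff_cond7 HX fg; have E68 := cond5_iff_cond7 HX gf.
have E53 := cond5_iff_cond3 HX fg; have E64 := cond5_iff_cond3 HX gf.
have E56 : fillable (act s1 x, act s1 y, f, g) <-> fillable (act s1 x, act s1 y, g, f).
  by split=> [/E15/(cond1_to_cond6 HX fg) | /E26/(cond1_to_cond6 HX gf)].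
have to5 (j : 'I_8) : fillable (bnd x y f g j) <-> fillable (act s1 x, act s1 y, f, g).
  case: j => [[|[|[|[|[|[|[|[|//]]]]]]]] ?] /=.
  - exact: E15.
  - exact: iff_trans E26 (iff_sym E56).
  - exact: iff_sym E53.
  - exact: iff_trans (iff_sym E64) (iff_sym E56).
  - by [].
  - exact: iff_sym E56.
  - exact: iff_sym E57.
  - exact: iff_trans (iff_sym E68) (iff_sym E56).
by move=> j; apply/fillableE/to5/(to5 i)/fillableE.
Qed.
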